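(* Let $k > 0$, let $\mathcal{J} \subseteq \{1,\dots,n\}$, and let ${\mathbf{x}}^* = k\sum_{j\in\mathcal{J}} {\mathbf{e}}_j$. Suppose there is a vector ${\mathbf{c}}$ with $$\frac{P {\mathbf{e}}_j}{\| P {\mathbf{e}}_j \|_2} \cdot {\mathbf{c}} = 1 \ \ \forall j \in \mathcal{J}, \qquad \frac{P {\mathbf{e}}_i}{\| P {\mathbf{e}}_i \|_2} \cdot {\mathbf{c}} < 1 \ \ \forall i \in \mathcal{J}^c.$$ Then ${\mathbf{x}}^*$ is the unique solution of $$\min_{0 \leq {\mathbf{x}} \leq k} \| W {\mathbf{x}} \|_1 \quad \text{subject to} \quad A {\mathbf{x}} = A {\mathbf{x}}^*.$$
   Context: $A \in \mathbb{R}^{m\times n}$ is a matrix, $A^\dagger$ its Moore–Penrose pseudoinverse, and $P = A^\dagger A$ the orthogonal projection onto $\mathcal{N}(A)^\perp$. ${\mathbf{e}}_1,\dots,{\mathbf{e}}_n$ are the standard unit vectors, assumed not to lie in $\mathcal{N}(A)$, so $w_i := \|P{\mathbf{e}}_i\|_2 > 0$; $W = \mathrm{diag}(w_1,\dots,w_n)$. Inequalities $0\le{\mathbf{x}}\le k$ are componentwise. *)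

From HB Require Import structures.
From mathcomp Require Import all_boot all_order all_algebra.
Set Implicit Arguments. Unset Strict Implicit. Unset Printing Implicit Defensive.
Import Order.TTheory GRing.Theory Num.Theory.
Local Open Scope ring_scope.

(* The Moore-Penrose pseudoinverse X of A, characterized by the four
   Penrose equations (which determine it uniquely). *)
Definition is_pinv (R : rcfType) (m n : nat) (A : 'M[R]_(m, n)) (X : 'M[R]_(n, m)) : Prop :=
  [/\ A *m X *m A = A, X *m A *m X = X, (A *m X)^T = A *m X & (X *m A)^T = X *m A].

Definition evec (R : rcfType) (n : nat) (j : 'I_n) : 'cV[R]_n := delta_mx j 0.

Definition dotv (R : rcfType) (n : nat) (u v : 'cV[R]_n) : R := \sum_i u i 0 * v i 0.
Definition norm2 (R : rcfType) (n : nat) (v : 'cV[R]_n) : R := Num.sqrt (dotv v v).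
Definition norm1 (R : rcfType) (n : nat) (v : 'cV[R]_n) : R := \sum_i `|v i 0|.

Definition Wmat (R : rcfType) (n : nat) (P : 'M[R]_n) : 'M[R]_n :=
  diag_mx (\row_i norm2 (P *m evec R i)).

Definition unique_minimizer (T : Type) (R : rcfType) (feasible : T -> Prop) (f : T -> R) (x0 : T) : Prop :=
  feasible x0 /\ (forall x, feasible x -> f x0 <= f x) /\
  (forall x, feasible x -> f x <= f x0 -> x = x0).

From HB Require Import structures.
From mathcomp Require Import all_boot all_order all_algebra.

Set Implicit Arguments.
Unset Strict Implicit.
Unset Printing Implicit Defensive.
Import Order.TTheory GRing.Theory Num.Theory.
Local Open Scope ring_scope.

(** The vector [s := P^T c] is a dual certificate: [s j = w j] on [J] and
   [s i < w i] off [J].  A feasible [x] differs from [x0 := k 1_J] by a vector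
   in the kernel of [P], so [s . (x - x0) = c . P (x - x0) = 0], and hence
   [w . x - w . x0 = sum_(i notin J) (w i - s i) x i >= 0], with equality
   only if [x] vanishes off [J].  Such an [x] lies below [x0]
   coordinatewise, and equal [w]-weighted sums with [w > 0] then force
   [x = x0]. *)

Section DualCertificate.

Variables (R : realDomainType) (I : finType) (w s : I -> R) (J : {set I}) (k : R).
Variable x0 : I -> R.

Hypothesis w_gt0 : forall i, 0 < w i.
Hypothesis s_eq_w : {in J, forall j, s j = w j}.
Hypothesis s_lt_w : forall i, i \notin J -> s i < w i.
Hypothesis x0E : forall i, x0 i = if i \in J then k else 0.

Lemma weighted_sum_gap (x : I -> R) :
    \sum_i s i * (x i - x0 i) = 0 ->
  \sum_i w i * x i - \sum_i w i * x0 i = \sum_(i | i \notin J) (w i - s i) * x i.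
Proof.
move=> s_orth; rewrite -sumrB -[LHS]subr0 -{2}s_orth -sumrB.
rewrite (bigID (mem J)) /= big1 ?add0r => [|j jJ].
  by apply: eq_bigr => i iJ; rewrite x0E (negbTE iJ) !(mulr0, subr0) mulrBl.
by rewrite s_eq_w // -mulrBr subrr.
Qed.

Lemma weighted_sum_gap_ge0 (x : I -> R) :
  (forall i, 0 <= x i) -> 0 <= \sum_(i | i \notin J) (w i - s i) * x i.
Proof.
by move=> x_ge0; apply: sumr_ge0 => i iJ; rewrite mulr_ge0 // subr_ge0 ltW ?s_lt_w.
Qed.

Lemma weighted_sum_min (x : I -> R) :
    (forall i, 0 <= x i) -> \sum_i s i * (x i - x0 i) = 0 ->
  \sum_i w i * x0 i <= \sum_i w i * x i.
Proof.
by move=> x_ge0 s_orth; rewrite -subr_ge0 weighted_sum_gap // weighted_sum_gap_ge0.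
Qed.

Lemma weighted_sum_min_eq (x : I -> R) :
    (forall i, 0 <= x i <= k) -> \sum_i s i * (x i - x0 i) = 0 ->
    \sum_i w i * x i <= \sum_i w i * x0 i ->
  x =1 x0.
Proof.
move=> x_bnd s_orth x_le.
have x_ge0 i : 0 <= x i by case/andP: (x_bnd i).
have gap0 : \sum_(i | i \notin J) (w i - s i) * x i = 0.
  apply/eqP; rewrite eq_le weighted_sum_gap_ge0 // andbT.
  by rewrite -weighted_sum_gap // subr_le0.
have x_offJ i : i \notin J -> x i = 0.
  have term_ge0 j : j \notin J -> 0 <= (w j - s j) * x j.
    by move=> jJ; rewrite mulr_ge0 // subr_ge0 ltW ?s_lt_w.
  move=> iJ; have /eqP := psumr_eq0P term_ge0 gap0 iJ.
  by rewrite mulf_eq0 subr_eq0 (gt_eqF (s_lt_w iJ)) => /eqP.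
have x_le_x0 i : 0 <= x0 i - x i.
  by rewrite x0E subr_ge0; case: ifPn => [_|/x_offJ ->//]; case/andP: (x_bnd i).
have sum0 : \sum_i w i * (x0 i - x i) = 0.
  rewrite (eq_bigr _ (fun i _ => mulrBr _ _ _)) sumrB.
  apply/eqP; rewrite subr_eq0 eq_le x_le andbT -subr_ge0.
  by rewrite weighted_sum_gap // gap0.
have gap_ge0 i : true -> 0 <= w i * (x0 i - x i) by move=> _; rewrite mulr_ge0 // ltW.
move=> i; have /eqP := psumr_eq0P gap_ge0 sum0 (i := i) isT.
by rewrite mulf_eq0 (gt_eqF (w_gt0 i)) subr_eq0 => /eqP.
Qed.

End DualCertificate.

Section Vectors.

Variable R : rcfType.

Lemma mulmx_evec (p n : nat) (M : 'M[R]_(p, n)) (i : 'I_n) r :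
  (M *m evec R i) r 0 = M r i.
Proof.
rewrite /evec mxE (bigD1 i) //= mxE !eqxx mulr1 big1 ?addr0 // => j /negbTE ne.
by rewrite mxE ne mulr0.
Qed.

Lemma scale_sum_evecE (n : nat) (J : {set 'I_n}) (k : R) i :
  (k *: \sum_(j in J) evec R j) i 0 = if i \in J then k else 0.
Proof.
rewrite mxE summxE (eq_bigr (fun j => (j == i)%:R)) => [|j _]; last first.
  by rewrite mxE eq_sym andbT.
case: (boolP (i \in J)) => iJ; last first.
  by rewrite big1 ?mulr0 // => j jJ; case: eqP => // ji; rewrite -ji jJ in iJ.
by rewrite (bigD1 i) //= eqxx big1 ?addr0 ?mulr1 // => j /andP[_ /negbTE ->].
Qed.

Lemma norm2_gt0 (n : nat) (v : 'cV[R]_n) : v != 0 -> 0 < norm2 v.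
Proof.
move=> v_neq0; rewrite /norm2 sqrtr_gt0 lt_def.
have sqv_ge0 i : true -> 0 <= v i 0 * v i 0 by rewrite -expr2 sqr_ge0.
rewrite sumr_ge0 // andbT; apply: contra v_neq0 => /eqP dot0.
apply/eqP/matrixP => i j; rewrite (ord1 j) mxE.
by have /eqP := psumr_eq0P sqv_ge0 dot0 (i := i) isT; rewrite mulf_eq0 orbb => /eqP.
Qed.

Lemma dotv_trmx_mul (p n : nat) (M : 'M[R]_(p, n)) (c : 'cV[R]_p) (v : 'cV[R]_n) :
  dotv (M^T *m c) v = dotv c (M *m v).
Proof.
rewrite /dotv; under eq_bigr do rewrite mxE mulr_suml.
rewrite exchange_big; apply: eq_bigr => r _; rewrite mxE mulr_sumr.
by apply: eq_bigr => i _; rewrite !mxE mulrCA mulrA.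
Qed.

Lemma dotv_trmx_ker (p n : nat) (M : 'M[R]_(p, n)) (c : 'cV[R]_p) (v : 'cV[R]_n) :
  M *m v = 0 -> dotv (M^T *m c) v = 0.
Proof.
by move=> Mv0; rewrite dotv_trmx_mul Mv0 /dotv big1 // => r _; rewrite mxE mulr0.
Qed.

Lemma dotv_scale_mulmx_evec (p n : nat) (M : 'M[R]_(p, n)) (a : R) i (c : 'cV[R]_p) :
  dotv (a *: (M *m evec R i)) c = a * (M^T *m c) i 0.
Proof.
rewrite /dotv mxE mulr_sumr; apply: eq_bigr => r _.
by rewrite mxE mulmx_evec mxE mulrA.
Qed.

Lemma norm1_diag_mulmx (n : nat) (d : 'rV[R]_n) (x : 'cV[R]_n) :
    (forall i, 0 <= d 0 i) -> (forall i, 0 <= x i 0) ->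
  norm1 (diag_mx d *m x) = \sum_i d 0 i * x i 0.
Proof.
move=> d_ge0 x_ge0; rewrite /norm1 mul_diag_mx; apply: eq_bigr => i _.
by rewrite mxE ger0_norm // mulr_ge0.
Qed.

Lemma pinv_mulmx_neq0 (m n p : nat) (A : 'M[R]_(m, n)) (X : 'M[R]_(n, m)) (v : 'M[R]_(n, p)) :
  A *m X *m A = A -> A *m v != 0 -> X *m A *m v != 0.
Proof.
move=> AXA; apply: contra => /eqP XAv0.
by rewrite -AXA -!mulmxA [X *m (A *m v)]mulmxA XAv0 mulmx0.
Qed.

End Vectors.

Theorem corollary3 (R : rcfType) (m n : nat) (A : 'M[R]_(m, n)) (Adag : 'M[R]_(n, m))
  (hAdag : is_pinv A Adag)
  (he : forall i : 'I_n, A *m evec R i != 0)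
  (k : R) (hk : 0 < k) (J : {set 'I_n}) (c : 'cV[R]_n)
  (hJ : forall j, j \in J ->
     dotv ((norm2 (Adag *m A *m evec R j))^-1 *: (Adag *m A *m evec R j)) c = 1)
  (hJc : forall i, i \notin J ->
     dotv ((norm2 (Adag *m A *m evec R i))^-1 *: (Adag *m A *m evec R i)) c < 1) :
  let P := Adag *m A in
  let xstar : 'cV[R]_n := k *: \sum_(j in J) evec R j in
  unique_minimizer
    (fun x : 'cV[R]_n => (forall i, 0 <= x i 0 <= k) /\ A *m x = A *m xstar)
    (fun x => norm1 (Wmat P *m x)) xstar.
Proof.
move=> P xstar; case: hAdag => AXA _ _ _.
pose w (i : 'I_n) : R := norm2 (P *m evec R i).
pose s (i : 'I_n) : R := (P^T *m c) i 0.
have w_gt0 i : 0 < w i by apply/norm2_gt0/pinv_mulmx_neq0.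
have s_eq_w j : j \in J -> s j = w j.
  by move/hJ; rewrite dotv_scale_mulmx_evec mulrC => /divr1_eq.
have s_lt_w i : i \notin J -> s i < w i.
  by move/hJc; rewrite dotv_scale_mulmx_evec (ltr_pdivrMl _ _ (w_gt0 i)) mulr1.
have xstarE i : xstar i 0 = if i \in J then k else 0 by exact: scale_sum_evecE.
have xstar_bnd i : 0 <= xstar i 0 <= k.
  by rewrite xstarE; case: ifP; rewrite ?lexx ltW.
have xstar_ge0 i : 0 <= xstar i 0 by case/andP: (xstar_bnd i).
have objE (x : 'cV[R]_n) :
    (forall i, 0 <= x i 0) -> norm1 (Wmat P *m x) = \sum_i w i * x i 0.
  move=> x_ge0; rewrite norm1_diag_mulmx // => [|i]; last by rewrite mxE; exact/ltW/w_gt0.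
  by apply: eq_bigr => i _; rewrite mxE.
have s_orth (x : 'cV[R]_n) :
    A *m x = A *m xstar -> \sum_i s i * (x i 0 - xstar i 0) = 0.
  move=> Ax; have Pdiff : P *m (x - xstar) = 0.
    by rewrite -mulmxA mulmxBr Ax subrr mulmx0.
  rewrite -[RHS](dotv_trmx_ker c Pdiff); apply: eq_bigr => i _.
  by congr (_ * _); rewrite !mxE.
split=> [//|]; split=> x [x_bnd Ax];
    have x_ge0 i : 0 <= x i 0 by case/andP: (x_bnd i).
  by rewrite !objE // (weighted_sum_min s_eq_w s_lt_w xstarE x_ge0 (s_orth x Ax)).
rewrite !objE // => x_le; apply/matrixP => i j; rewrite (ord1 j).
exact: (weighted_sum_min_eq w_gt0 s_eq_w s_lt_w xstarE x_bnd (s_orth x Ax) x_le).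
Qed.
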